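(* Let $\vec{\mathcal G}$ be an ergodic graph of a deterministic two-player mean-payoff game and suppose $r\in\mathcal P^{\sigma,\tau}$ for some $(\sigma,\tau)\in\Xi$. If $(i,j)\in E$ with $i\in V_{\min}$ and $j\ne\tau(i)$, then $(x,r_{-ij})\in\mathcal P^{\sigma,\tau}$ for all $x>\lambda^{\sigma,\tau}(r)+u^{\sigma,\tau}_i(r)-u^{\sigma,\tau}_j(r)$. If $(i,j)\in E$ with $i\in V_{\max}$ and $j\ne\sigma(i)$, then $(x,r_{-ij})\in\mathcal P^{\sigma,\tau}$ for all $x<\lambda^{\sigma,\tau}(r)+u^{\sigma,\tau}_i(r)-u^{\sigma,\tau}_j(r)$.
   Context: Setting: directed graph $\vec{\mathcal G}=([n],E)$ without multiple edges (loops allowed), each vertex having an outgoing edge, $[n]=V_{\max}\uplus V_{\min}$, weights $r\in\mathbb R^E=\mathbb R^m$; $(x,r_{-ij})$ is $r$ with coordinate $ij$ replaced by $x$. Ergodic equation in $(\lambda,u)$: $\lambda+u_i=\max_{(i,j)\in E}\{r_{ij}+u_j\}$ ($i\in V_{\max}$), $\lambda+u_i=\min_{(i,j)\in E}\{r_{ij}+u_j\}$ ($i\in V_{\min}$); $u$ is a bias if $(\lambda,u)$ solves it; the graph is ergodic if it is solvable for every $r$. Policies $\sigma,\tau$ choose outgoing edges at Max/Min vertices; a pair is bias-induced if some bias $u$ has $\sigma(i)$ attaining the max and $\tau(i)$ attaining the min at every vertex. $\vec{\mathcal G}^{\sigma,\tau}$ keeps at each vertex only the chosen edge; $\Xi$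 is the set of pairs with exactly one directed cycle in $\vec{\mathcal G}^{\sigma,\tau}$. $\lambda^{\sigma,\tau}(r)$ is the mean weight of that cycle and $u^{\sigma,\tau}(r)_l$ is the total weight, for edge weights $r_{ij}-\lambda^{\sigma,\tau}(r)$, of the path in $\vec{\mathcal G}^{\sigma,\tau}$ from $l$ to the smallest-index vertex on the cycle. $\mathcal P^{\sigma,\tau}$ is the set of $r$ such that $(\sigma,\tau)$ is the only pair of bias-induced policies for weights $r$. *)

From mathcomp Require Import all_boot all_order all_algebra.
From mathcomp Require Import reals.
Set Implicit Arguments. Unset Strict Implicit. Unset Printing Implicit Defensive.
Import Order.TTheory GRing.Theory Num.Theory.
Local Open Scope ring_scope.

(* Game graph: vertices 'I_n, edges E : rel 'I_n (no multi-edges, loops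
   allowed), Max vertices isMax, Min vertices the complement.
   Weights r : 'I_n -> 'I_n -> R (only values r i j with E i j matter).
   A pair of policies (sigma, tau) is encoded as a single map s : 'I_n -> 'I_n,
   s i = sigma i on Max vertices and s i = tau i on Min vertices. *)

Section Game.
Variables (R : realType) (n : nat) (E : rel 'I_n) (isMax : pred 'I_n).

Definition solves (r : 'I_n -> 'I_n -> R) (lam : R) (u : 'I_n -> R) : Prop :=
  forall i,
    (isMax i ->
       (forall j, E i j -> r i j + u j <= lam + u i) /\
       (exists j, E i j /\ r i j + u j = lam + u i)) /\
    (~~ isMax i ->
       (forall j, E i j -> lam + u i <= r i j + u j) /\
       (exists j, E i j /\ r i j + u j = lam + u i)).

Definition ergodic : Prop :=
  forall r : 'I_n -> 'I_n -> R, exists lam u, solves r lam u.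

Definition is_policy (s : 'I_n -> 'I_n) : Prop := forall i, E i (s i).

Definition bias_induced (r : 'I_n -> 'I_n -> R) (s : 'I_n -> 'I_n) : Prop :=
  is_policy s /\
  exists lam u, solves r lam u /\ forall i, r i (s i) + u (s i) = lam + u i.

Definition inP (r : 'I_n -> 'I_n -> R) (s : 'I_n -> 'I_n) : Prop :=
  bias_induced r s /\ forall s', bias_induced r s' -> s' =1 s.

Definition on_cycle (s : 'I_n -> 'I_n) (i : 'I_n) : bool :=
  [exists k : 'I_n, iter k.+1 s i == i].

Definition cyc (s : 'I_n -> 'I_n) : {set 'I_n} := [set i | on_cycle s i].

(* Xi: the functional graph of s has exactly one directed cycle, i.e.
   all cycle vertices lie on one orbit *)
Definition inXi (s : 'I_n -> 'I_n) : Prop :=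
  is_policy s /\ (exists i, on_cycle s i) /\
  forall i j, on_cycle s i -> on_cycle s j -> exists k, iter k s i = j.

Definition lam_pol (s : 'I_n -> 'I_n) (r : 'I_n -> 'I_n -> R) : R :=
  (\sum_(i in cyc s) r i (s i)) / (#|cyc s|%:R).

Definition is_min_cyc (s : 'I_n -> 'I_n) (v : 'I_n) : bool :=
  on_cycle s v && [forall w : 'I_n, on_cycle s w ==> (v <= w)%N].

Definition steps (s : 'I_n -> 'I_n) (l : 'I_n) : nat :=
  find (fun k => is_min_cyc s (iter k s l)) (iota 0 n).

Definition u_pol (s : 'I_n -> 'I_n) (r : 'I_n -> 'I_n -> R) (l : 'I_n) : R :=
  \sum_(k < steps s l) (r (iter k s l) (iter k.+1 s l) - lam_pol s r).

End Game.

Definition upd (R : Type) (n : nat) (r : 'I_n -> 'I_n -> R) (i j : 'I_n) (x : R)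
  : 'I_n -> 'I_n -> R :=
  fun k l => if (k == i) && (l == j) then x else r k l.

From mathcomp Require Import all_boot all_order all_algebra.
From mathcomp Require Import reals.
From mathcomp Require Import lra zify.
Import Order.TTheory GRing.Theory Num.Theory.
Local Open Scope ring_scope.
Set Implicit Arguments. Unset Strict Implicit.

(* Let (lam, u) be a bias witnessing r \in P^{sigma,tau}.  Uniqueness of the
   bias-induced pair forces every edge off the policy s to be strictly
   non-optimal at (lam, u).  Conversely, tightness along s together with this
   strictness already gives uniqueness when s has a single cycle: for another
   bias-induced pair with bias (lam', u'), the difference u' - u can only
   increase along s from a maximum and decrease from a minimum, which gives
   lam' = lam and keeps both extremal orbits at constant level until they meet
   on the cycle; so u' - u is constant and the policies coincide.  Changing the
   weight of an off-policy edge (i, j) to x keeps (lam, u) tight, and strict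
   exactly beyond the threshold lam + u i - u j, which equals
   lam^{sigma,tau}(r) + u^{sigma,tau}_i(r) - u^{sigma,tau}_j(r) because
   tightness along s determines lam and u up to an additive constant. *)

Section FunctionalGraph.
Variables (n : nat) (E : rel 'I_n) (s : 'I_n -> 'I_n).

Lemma order_le_card (l : 'I_n) : (order s l <= n)%N.
Proof. by have := max_card (fconnect s l); rewrite card_ord. Qed.

Lemma iter_lt_card (l v : 'I_n) (m : nat) :
  iter m s l = v -> exists2 m', (m' < n)%N & iter m' s l = v.
Proof.
move=> <-; have lv := fconnect_iter s m l.
exists (findex s l (iter m s l)); last exact: iter_findex.
exact: leq_trans (findex_max lv) (order_le_card l).
Qed.

Lemma on_cycle_iter_card (l : 'I_n) : on_cycle s (iter n s l).
Proof.
have /trajectP[p lt_p_q def_q] := looping_order s l.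
set q := order s l in lt_p_q def_q; have le_q_n : (q <= n)%N := order_le_card l.
have lt_k_n : ((q - p).-1 < n)%N by lia.
apply/existsP; exists (Ordinal lt_k_n); apply/eqP => /=.
rewrite -iterS (_ : (q - p).-1.+1 = q - p)%N; last by lia.
rewrite -iterD (_ : (q - p + n = (n - p) + q)%N); last by lia.
by rewrite iterD def_q -iterD subnK //; lia.
Qed.

Lemma on_cycle_f (a : 'I_n) : on_cycle s a -> on_cycle s (s a).
Proof.
move=> /existsP[k /eqP ka]; apply/existsP; exists k.
by rewrite -iterSr iterS ka.
Qed.

Lemma cyc_inj : {in cyc s &, injective s}.
Proof.
move=> a b; rewrite !inE => /existsP[ka /eqP Ha] /existsP[kb /eqP Hb] sab.
(* both a and b are fixed by iter N s for the common period N *)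
have Na : iter (kb.+1 * ka.+1) s a = a by rewrite iterM iter_fix.
have Nb : iter (ka.+1 * kb.+1) s b = b by rewrite iterM iter_fix.
by rewrite -Na -Nb mulnC mulSn addSn !iterSr sab.
Qed.

Lemma sum_cyc_shift (V : nmodType) (F : 'I_n -> V) :
  \sum_(k in cyc s) F (s k) = \sum_(k in cyc s) F k.
Proof.
rewrite -(big_imset _ cyc_inj); apply: congr_big => // y.
suff -> : [set s x | x in cyc s] = cyc s by [].
apply/eqP; rewrite eqEcard card_in_imset ?leqnn ?andbT; last exact: cyc_inj.
by apply/subsetP => _ /imsetP[x xc ->]; rewrite inE on_cycle_f // -inE.
Qed.

Lemma is_min_cyc_uniq (a b : 'I_n) : is_min_cyc s a -> is_min_cyc s b -> a = b.
Proof.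
move=> /andP[ca /forallP Ha] /andP[cb /forallP Hb].
by apply/val_inj/eqP; rewrite eqn_leq (implyP (Ha b) cb) (implyP (Hb a) ca).
Qed.

Lemma exists_min_cyc : inXi E s -> exists v, is_min_cyc s v.
Proof.
move=> [_ [[c0 c0_cyc] _]].
have [v v_cyc v_min] := arg_minnP (fun c : 'I_n => val c) c0_cyc.
by exists v; apply/andP; split => //; apply/forallP => w; apply/implyP/v_min.
Qed.

Lemma iter_steps (v : 'I_n) :
  inXi E s -> is_min_cyc s v -> forall l, iter (steps s l) s l = v.
Proof.
move=> [_ [_ one_cycle]] v_min l.
have [k] := one_cycle _ _ (on_cycle_iter_card l) (proj1 (andP v_min)).
rewrite -iterD => /iter_lt_card[m lt_m_n def_v].
have has_min : has (fun k => is_min_cyc s (iter k s l)) (iota 0 n).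
  by apply/hasP; exists m; rewrite ?mem_iota ?def_v.
have := nth_find 0%N has_min; rewrite has_find size_iota in has_min.
by rewrite nth_iota // add0n => /is_min_cyc_uniq; apply.
Qed.

End FunctionalGraph.

Section Game.
Variables (R : realType) (n : nat) (E : rel 'I_n) (isMax : pred 'I_n).
Implicit Types (r : 'I_n -> 'I_n -> R) (s : 'I_n -> 'I_n).
Implicit Types (lam : R) (u : 'I_n -> R).

Definition tight r s lam u : Prop := forall k, r k (s k) + u (s k) = lam + u k.

Definition strict r s lam u : Prop :=
  forall k l, E k l -> l != s k ->
    (isMax k -> r k l + u l < lam + u k) /\
    (~~ isMax k -> lam + u k < r k l + u l).

Section TightPolicy.
Variables (r : 'I_n -> 'I_n -> R) (s : 'I_n -> 'I_n) (lam : R) (u : 'I_n -> R).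
Hypotheses (s_Xi : inXi E s) (s_tight : tight r s lam u).

Lemma sum_tight_path m l :
  \sum_(k < m) (r (iter k s l) (iter k.+1 s l) - lam) = u l - u (iter m s l).
Proof.
elim: m => [|m IHm]; first by rewrite big_ord0 subrr.
by rewrite big_ord_recr /= IHm; have := s_tight (iter m s l); lra.
Qed.

Lemma lam_pol_tight : lam_pol s r = lam.
Proof.
have [_ [[c0 c0_cyc] _]] := s_Xi.
have cyc_gt0 : (0 < #|cyc s|)%N by apply/card_gt0P; exists c0; rewrite inE.
rewrite /lam_pol (eq_bigr (fun k => lam + (u k - u (s k)))) => [|k _];
  last by have := s_tight k; lra.
rewrite big_split sumrB /= (sum_cyc_shift s u) subrr addr0 sumr_const.
by rewrite -[X in X / _]mulr_natr mulfK // pnatr_eq0 -lt0n.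
Qed.

Lemma u_pol_sub a b : u_pol s r a - u_pol s r b = u a - u b.
Proof.
have [v v_min] := exists_min_cyc s_Xi.
rewrite /u_pol lam_pol_tight !sum_tight_path !(iter_steps s_Xi v_min); lra.
Qed.

End TightPolicy.

Lemma strict_solves r s lam u :
  is_policy E s -> tight r s lam u -> strict r s lam u ->
  solves E isMax r lam u.
Proof.
move=> s_pol s_tight s_strict k.
have attained : exists j, E k j /\ r k j + u j = lam + u k by exists (s k).
split=> k_side; split=> // j Ekj; have [->|j_off] := eqVneq j (s k);
  rewrite ?s_tight // le_eqVlt; have [ltM ltm] := s_strict k j Ekj j_off.
- by rewrite ltM ?orbT.
- by rewrite ltm ?orbT.
Qed.

Section Uniqueness.
Variables (r : 'I_n -> 'I_n -> R) (s s' : 'I_n -> 'I_n) (lam lam' : R).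
Variables (u u' : 'I_n -> R).
Hypotheses (s_Xi : inXi E s) (s_tight : tight r s lam u).
Hypotheses (s_strict : strict r s lam u) (s_solves : solves E isMax r lam u).
Hypotheses (s'_policy : is_policy E s') (s'_tight : tight r s' lam' u').
Hypothesis s'_solves : solves E isMax r lam' u'.

Let w k := u' k - u k.

Lemma w_step_lb k : w k + (lam' - lam) <= w (if isMax k then s' k else s k).
Proof.
rewrite /w; case: ifPn => k_side.
- have [le _] := (s_solves k).1 k_side.
  by have := le _ (s'_policy k); have := s'_tight k; lra.
- have [le _] := (s'_solves k).2 k_side.
  by have := le _ (proj1 s_Xi k); have := s_tight k; lra.
Qed.

Lemma w_step_ub k : w (if isMax k then s k else s' k) <= w k + (lam' - lam).
Proof.
rewrite /w; case: ifPn => k_side.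
- have [le _] := (s'_solves k).1 k_side.
  by have := le _ (proj1 s_Xi k); have := s_tight k; lra.
- have [le _] := (s_solves k).2 k_side.
  by have := le _ (s'_policy k); have := s'_tight k; lra.
Qed.

Lemma w_extrema : exists a b, forall k, w b <= w k <= w a.
Proof.
have [_ [[c0 _] _]] := s_Xi.
have [a _ a_max] := @arg_maxP _ _ _ c0 xpredT w isT.
have [b _ b_min] := @arg_minP _ _ _ c0 xpredT w isT.
by exists a, b => k; apply/andP; split; [exact: b_min | exact: a_max].
Qed.

(* at a maximum of w the lower bound forces lam' <= lam, at a minimum the
   upper bound forces lam <= lam' *)
Lemma bias_lam_eq : lam' = lam.
Proof.
have [a [b wab]] := w_extrema; have := w_step_lb a; have := w_step_ub b.
have /andP[_ ?] := wab (if isMax a then s' a else s a).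
have /andP[? _] := wab (if isMax b then s b else s' b).
lra.
Qed.

Lemma w_eq_policy k : w (s' k) = w k -> s' k = s k.
Proof.
move=> wk; apply/eqP; apply: contraT => off.
have [ltM ltm] := s_strict (s'_policy k) off.
move: wk; rewrite /w; have := s'_tight k; rewrite bias_lam_eq.
by case: (boolP (isMax k)) => [/ltM|/ltm]; lra.
Qed.

Lemma w_iter_max a : (forall k, w k <= w a) -> forall m, w (iter m s a) = w a.
Proof.
move=> a_max; elim=> [|m IHm] //=; set k := iter m s a in IHm *.
have := w_step_lb k; rewrite bias_lam_eq subrr addr0.
case: ifP => _ lb; last by have := a_max (s k); lra.
have wk : w (s' k) = w k by have := a_max (s' k); lra.
by rewrite -(w_eq_policy wk) wk.
Qed.

Lemma w_iter_min b : (forall k, w b <= w k) -> forall m, w (iter m s b) = w b.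
Proof.
move=> b_min; elim=> [|m IHm] //=; set k := iter m s b in IHm *.
have := w_step_ub k; rewrite bias_lam_eq subrr addr0.
case: ifP => _ ub; first by have := b_min (s k); lra.
have wk : w (s' k) = w k by have := b_min (s' k); lra.
by rewrite -(w_eq_policy wk) wk.
Qed.

(* the orbits of a maximum and of a minimum of w enter the unique cycle of s *)
Lemma bias_policy_eq : s' =1 s.
Proof.
have [a [b wab]] := w_extrema; have [_ [_ one_cycle]] := s_Xi.
have [m def_b] :=
  one_cycle _ _ (on_cycle_iter_card s a) (on_cycle_iter_card s b).
have max_eq_min : w a = w b.
  rewrite -(w_iter_max _ (m + n)%N) ?iterD ?def_b ?w_iter_min //;
    by move=> k; case/andP: (wab k).
move=> k; apply: w_eq_policy.
have := wab k; have := wab (s' k); rewrite max_eq_min.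
by move=> /andP[? ?] /andP[? ?]; lra.
Qed.

End Uniqueness.

Lemma inP_tight_strict r s lam u :
  inXi E s -> tight r s lam u -> strict r s lam u -> inP E isMax r s.
Proof.
move=> s_Xi s_tight s_strict.
have s_solves := strict_solves (proj1 s_Xi) s_tight s_strict.
split; first by split; [exact: (proj1 s_Xi) | exists lam, u].
move=> s' [s'_policy [lam' [u' [s'_solves s'_tight]]]].
exact: (bias_policy_eq s_Xi s_tight s_strict s_solves s'_policy s'_tight
  s'_solves).
Qed.

(* a tight edge off s could replace s k in the policy, contradicting
   uniqueness *)
Lemma inP_strict r s lam u :
  inP E isMax r s -> solves E isMax r lam u -> tight r s lam u ->
  strict r s lam u.
Proof.
move=> [[s_policy _] s_unique] s_solves s_tight k l Ekl l_off.
have l_not_tight : r k l + u l != lam + u k.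
  apply/negP => /eqP l_tight; pose s2 m := if m == k then l else s m.
  have /s_unique/(_ k) : bias_induced E isMax r s2.
    split; first by move=> m; rewrite /s2; case: eqP => [->|].
    by exists lam, u; split=> // m; rewrite /s2; case: eqP => [->|].
  by rewrite /s2 eqxx => /eqP; rewrite (negbTE l_off).
split=> k_side; rewrite lt_neqAle.
- by have [le _] := (s_solves k).1 k_side; rewrite l_not_tight le.
- by have [ge _] := (s_solves k).2 k_side; rewrite eq_sym l_not_tight ge.
Qed.

Lemma tight_upd r s lam u i j x :
  j != s i -> tight r s lam u -> tight (upd r i j x) s lam u.
Proof.
move=> j_off s_tight k; rewrite /upd.
case: eqP => [->|_] /=; last exact: s_tight.
by rewrite eq_sym (negbTE j_off); exact: s_tight.
Qed.

Lemma strict_upd r s lam u i j x :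
  (isMax i -> x + u j < lam + u i) -> (~~ isMax i -> lam + u i < x + u j) ->
  strict r s lam u -> strict (upd r i j x) s lam u.
Proof.
move=> ltM ltm s_strict k l Ekl l_off; rewrite /upd.
by case: ifP => [/andP[/eqP -> /eqP ->] //|_]; exact: s_strict.
Qed.

End Game.

Theorem mainTheorem11 (R : realType) (n : nat) (E : rel 'I_n) (isMax : pred 'I_n)
  (out_edge : forall i, exists j, E i j)
  (erg : ergodic R E isMax)
  (s : 'I_n -> 'I_n) (r : 'I_n -> 'I_n -> R)
  (hXi : inXi E s) (hP : inP E isMax r s) :
  (forall i j, E i j -> ~~ isMax i -> j != s i ->
     forall x : R, lam_pol s r + u_pol s r i - u_pol s r j < x ->
       inP E isMax (upd r i j x) s) /\
  (forall i j, E i j -> isMax i -> j != s i ->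
     forall x : R, x < lam_pol s r + u_pol s r i - u_pol s r j ->
       inP E isMax (upd r i j x) s).
Proof.
have [[_ [lam [u [s_solves s_tight]]]] _] := hP.
have s_strict := inP_strict hP s_solves s_tight.
have lam_eq := lam_pol_tight hXi s_tight.
have u_sub := u_pol_sub hXi s_tight.
split=> i j _ i_side j_off x x_bound;
  apply: (inP_tight_strict hXi (tight_upd _ j_off s_tight));
  apply: strict_upd s_strict; move: i_side; case: (isMax i) => // _ _;
  have := u_sub i j; lra.
Qed.
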